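(* Let $a,b,c$ be signed indices (each a positive integer, possibly barred) with $|a|+|b|+|c|=w\ge 4$. If $(a,b)\ne(1,1)$ (with both unbarred), then $\zeta_\sqcup(a,b,c)=\zeta_*(a,b,c)$. Further, if $c=w-2$ or $c=\overline{w-2}$, then $$\zeta_\sqcup(1,1,c)=\zeta_*(1,1,c)+\tfrac12\zeta(2)\zeta(c).$$
   Context: Signed indices: a positive integer $s$ or a barred one $\bar s$, with $|s|=|\bar s|=s$. For signed indices, $\zeta(s_1,\dots,s_d)$ denotes the Euler sum $\sum_{n_1>\dots>n_d>0}\frac{z_1^{n_1}\cdots z_d^{n_d}}{n_1^{|s_1|}\cdots n_d^{|s_d|}}$ with $z_j=-1$ if $s_j$ is barred and $z_j=1$ otherwise; it converges iff $s_1\ne 1$ (unbarred). Regularized values: the truncated sum $\zeta^{(M)}$ (same sum restricted to $M\ge n_1$) has, as $M\to\infty$, an expansion $P(\log M+\gamma)+o(1)$ with $P$ a polynomial ($\gamma$ Euler's constant); $\zeta_*:=P(T)\in\mathbb{R}[T]$. With $a_k=\prod_{j\le k}z_j$, the iterated integral $\int_0^{1-\varepsilon}\left(\frac{dt}{t}\right)^{|s_1|-1}\frac{dt}{a_1-t}\cdots\left(\frac{dt}{t}\right)^{|s_d|-1}\frac{dt}{a_d-t}$ (over $1-\varepsilon>t_1>t_2>\dots>0$, forms read left to right) has, as $\varepsilon\to0^+$, an expansion $Q(-\log\varepsilon)+o(1)$ with $Q$ a polynomial; $\zeta_\sqcup:=Q(T)$. Both equal the Euler sum for convergent indices. *)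

From Stdlib Require Import Reals List.
From Coquelicot Require Import Coquelicot.
Import ListNotations.
Open Scope R_scope.

(* A signed index is a pair (k, barred) : nat * bool, with k = |s| >= 1
   (positivity is imposed as a hypothesis where needed); barred = true
   means the index is \bar k. *)
Definition sindex := (nat * bool)%type.

Definition zsgn (b : bool) : R := if b then -1 else 1.

Fixpoint sumR (M : nat) (f : nat -> R) : R :=
  match M with
  | O => 0
  | S m => sumR m f + f (S m)
  end.

(* Truncated Euler sum: sum over M >= n_1 > ... > n_d > 0 of
   prod z_j^{n_j} / n_j^{|s_j|}. *)
Fixpoint trunc (s : list sindex) (M : nat) : R :=
  match s with
  | [] => 1
  | (k, b) :: r =>
      sumR M (fun n => (zsgn b) ^ n / (INR n) ^ k * trunc r (Nat.pred n))
  end.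

Definition euler_sum (s : list sindex) : R := real (Lim_seq (trunc s)).

Definition euler_gamma : R :=
  real (Lim_seq (fun n => sumR n (fun k => / INR k) - ln (INR n))).

Fixpoint peval (p : list R) (T : R) : R :=
  match p with
  | [] => 0
  | c :: q => c + T * peval q T
  end.

(* zeta_* : the polynomial P with zeta^(M)(s) = P(log M + gamma) + o(1). *)
Definition stuffle_reg (s : list sindex) (P : list R) : Prop :=
  is_lim_seq (fun M => trunc s M - peval P (ln (INR M) + euler_gamma)) 0.

(* Letters of iterated integrals: None = dt/t, Some a = dt/(a - t). *)
Definition omega (l : option R) (t : R) : R :=
  match l with
  | None => / t
  | Some a => / (a - t)
  end.

(* Word (dt/t)^{|s_1|-1} dt/(a_1-t) ... (dt/t)^{|s_d|-1} dt/(a_d-t),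
   with a_k = z_1 ... z_k; acc is the running product. *)
Fixpoint word_aux (acc : R) (s : list sindex) : list (option R) :=
  match s with
  | [] => []
  | (k, b) :: r =>
      let a := acc * zsgn b in
      repeat None (Nat.pred k) ++ Some a :: word_aux a r
  end.

Definition word (s : list sindex) : list (option R) := word_aux 1 s.

Fixpoint iter_int (w : list (option R)) (x : R) : R :=
  match w with
  | [] => 1
  | l :: r => RInt (fun t => omega l t * iter_int r t) 0 x
  end.

(* zeta_sh : the polynomial Q with
   iter_int (word s) (1 - eps) = Q(-log eps) + o(1) as eps -> 0+. *)
Definition shuffle_reg (s : list sindex) (Q : list R) : Prop :=
  filterlim (fun eps => iter_int (word s) (1 - eps) - peval Q (- ln eps))
    (at_right 0) (locally 0).

From Stdlib Require Import Reals List Lra Lia.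
From Coquelicot Require Import Coquelicot.
Import ListNotations.
Open Scope R_scope.

(* The iterated integral of the word of [s] on [[0, x]] is the power series
   whose coefficients are the increments of the truncated sums [trunc s n].
   Suppose [trunc s n = a H_n^2 + O(1 + H_n)].  Since [H_n = log n + gamma + O(1/n)],
   the stuffle polynomial is [P(T) = c0 + c1 T + a T^2], and, because
   [H_n^2 = 2 trunc [1;1] n + trunc [2] n], the sequence
   [trunc s n - c1 H_n - 2 a trunc [1;1] n] tends to [c0 + a zeta(2)].  The
   generating functions of [H_n] and [2 trunc [1;1] n] are [-log(1-x)] and
   [log(1-x)^2], so Abel's theorem gives
   [Q(T) = c0 + a zeta(2) + c1 T + a T^2 = P(T) + a zeta(2)].
   In depth three the truncated sums are [O(1 + H_n)] unless [(a, b) = (1, 1)]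
   (summation by parts handles the barred [1]), while
   [trunc [1;1;c] n = zeta(c) H_n^2 / 2 + O(1 + H_n)] when [|c| >= 2]. *)

(** * Iterated integrals as power series *)

Lemma CV_radius_gt_of_bounded (a : nat -> R) B x :
  (forall n, Rabs (a n) <= B) -> Rabs x < 1 -> Rbar_lt (Rabs x) (CV_radius a).
Proof.
  intros Ha Hx.
  assert (H1 : Rbar_le 1 (CV_radius a)).
  { apply (proj1 (CV_radius_bounded a)). exists B. intros n.
    rewrite pow1, Rmult_1_r. apply Ha. }
  destruct (CV_radius a) as [r| |]; simpl in *; lra.
Qed.

Lemma ex_pseries_bounded (a : nat -> R) B x :
  (forall n, Rabs (a n) <= B) -> 0 <= x < 1 -> ex_pseries a x.
Proof.
  intros Ha Hx. apply CV_radius_inside, (CV_radius_gt_of_bounded a B); auto.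
  rewrite Rabs_right; lra.
Qed.

Lemma inv_sub_PSeries a t : Rabs t < Rabs a ->
  / (a - t) = PSeries (fun n => (/ a) ^ S n) t.
Proof.
  intros Ht. assert (Ha : a <> 0) by (intros ->; rewrite Rabs_R0 in Ht; pose proof (Rabs_pos t); lra).
  unfold PSeries. rewrite (Series_ext _ (fun n => / a * (t / a) ^ n)).
  2:{ intros n. simpl. unfold Rdiv. rewrite Rpow_mult_distr. ring. }
  rewrite Series_scal_l, Series_geom.
  - field. split; auto. intros Hat.
    assert (t = a) by (field_simplify in Hat; lra). subst. lra.
  - unfold Rdiv. rewrite Rabs_mult, Rabs_inv.
    apply (Rmult_lt_reg_r (Rabs a)). apply Rabs_pos_lt; auto.
    rewrite Rmult_assoc, Rinv_l, Rmult_1_l, Rmult_1_r; auto. apply Rabs_no_R0; auto.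
Qed.

Lemma Rabs_sum_f_R0_le (f : nat -> R) B m :
  (forall i, Rabs (f i) <= B) -> Rabs (sum_f_R0 f m) <= INR (S m) * B.
Proof.
  intros Hf. induction m as [|m IH]; simpl sum_f_R0.
  - simpl. specialize (Hf 0%nat). lra.
  - rewrite S_INR. eapply Rle_trans; [apply Rabs_triang|]. specialize (Hf (S m)). lra.
Qed.

Lemma pm1_inv_Rabs_pow a : a = 1 \/ a = -1 -> / a = a /\ forall n, Rabs (a ^ n) = 1.
Proof.
  intros [-> | ->]; split; try field; intros n; rewrite <- RPow_abs;
    rewrite ?Rabs_R1, ?Rabs_m1; apply pow1.
Qed.

Fixpoint word_coef (w : list (option R)) : nat -> R :=
  match w with
  | [] => fun n => match n with O => 1 | _ => 0 end
  | None :: r => PS_Int (PS_decr_1 (word_coef r))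
  | Some a :: r => PS_Int (PS_mult (word_coef r) (fun n => (/ a) ^ S n))
  end.

(* [dt/t] is never the last letter, so that every integrand is bounded near [0]. *)
Fixpoint admissible_word (w : list (option R)) : Prop :=
  match w with
  | [] => True
  | None :: r => r <> [] /\ admissible_word r
  | Some a :: r => (a = 1 \/ a = -1) /\ admissible_word r
  end.

Lemma word_coef_0 w : w <> [] -> word_coef w 0 = 0.
Proof. destruct w as [|[a|] r]; simpl; congruence. Qed.

Lemma Rabs_word_coef_le1 w : admissible_word w -> forall n, Rabs (word_coef w n) <= 1.
Proof.
  induction w as [|[a|] r IH]; cbn [word_coef admissible_word]; intros Hw n.
  - destruct n; rewrite ?Rabs_R1, ?Rabs_R0; lra.
  - destruct Hw as [Ha Hr]. destruct (pm1_inv_Rabs_pow a Ha) as [Hinv Hpow].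
    destruct n as [|m]; cbn [PS_Int]; [rewrite Rabs_R0; lra|].
    assert (Hm : Rabs (PS_mult (word_coef r) (fun n => (/ a) ^ S n) m) <= INR (S m) * 1).
    { apply Rabs_sum_f_R0_le. intros i. rewrite Rabs_mult, Hinv, Hpow, Rmult_1_r. auto. }
    assert (HS : 0 < INR (S m)) by (apply lt_0_INR; lia).
    unfold Rdiv. rewrite Rabs_mult, Rabs_inv, (Rabs_right (INR (S m))) by lra.
    apply (Rmult_le_reg_r (INR (S m))); auto. field_simplify; lra.
  - destruct Hw as [_ Hr]. destruct n as [|m]; cbn [PS_Int]; [rewrite Rabs_R0; lra|].
    unfold PS_decr_1, Rdiv. specialize (IH Hr (S m)).
    assert (HS : 1 <= INR (S m)) by (apply (le_INR 1); lia).
    rewrite Rabs_mult, Rabs_inv, (Rabs_right (INR (S m))) by lra.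
    apply (Rmult_le_reg_r (INR (S m))); [lra|]. field_simplify; lra.
Qed.

Lemma CV_radius_word_coef w x : admissible_word w -> Rabs x < 1 ->
  Rbar_lt (Rabs x) (CV_radius (word_coef w)).
Proof. intros Hw Hx. apply (CV_radius_gt_of_bounded _ 1); auto. apply Rabs_word_coef_le1; auto. Qed.

Lemma iter_int_PSeries w x : admissible_word w -> 0 <= x < 1 ->
  iter_int w x = PSeries (word_coef w) x.
Proof.
  revert x. induction w as [|[a|] r IH]; intros x Hw Hx;
    assert (Hx1 : Rabs x < 1) by (rewrite Rabs_right; lra).
  - cbn [iter_int word_coef]. rewrite PSeries_decr_1.
    + rewrite (PSeries_ext _ (fun _ => 0)) by reflexivity. rewrite PSeries_const_0. ring.
    + apply CV_radius_inside. apply (CV_radius_word_coef []); simpl; auto.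
  - destruct Hw as [Ha Hr]. cbn [iter_int word_coef omega].
    rewrite <- RInt_PSeries.
    2:{ rewrite <- CV_radius_Int. apply (CV_radius_word_coef (Some a :: r)); simpl; auto. }
    apply RInt_ext. rewrite Rmin_left, Rmax_right by lra. intros t Ht.
    assert (Ht1 : Rabs t < 1) by (rewrite Rabs_right; lra).
    destruct (pm1_inv_Rabs_pow a Ha) as [Hinv Hpow].
    assert (Hgeom : Rbar_lt (Rabs t) (CV_radius (fun n => (/ a) ^ S n))).
    { apply (CV_radius_gt_of_bounded _ 1); auto. intros n. rewrite Hinv, Hpow. lra. }
    rewrite IH, PSeries_mult by (auto; try lra; apply CV_radius_word_coef; auto).
    rewrite <- inv_sub_PSeries; [apply Rmult_comm|].
    specialize (Hpow 1%nat). rewrite pow_1 in Hpow. lra.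
  - destruct Hw as [Hne Hr]. cbn [iter_int word_coef omega].
    rewrite <- RInt_PSeries.
    2:{ rewrite CV_radius_decr_1. apply CV_radius_word_coef; auto. }
    apply RInt_ext. rewrite Rmin_left, Rmax_right by lra. intros t Ht.
    rewrite IH, PSeries_decr_1 by (auto; try lra;
      apply CV_radius_inside, CV_radius_word_coef; auto; rewrite Rabs_right; lra).
    rewrite word_coef_0, Rplus_0_l by auto. field_simplify; lra.
Qed.

Definition incr (u : nat -> R) (n : nat) : R :=
  match n with O => u O | S m => u (S m) - u m end.

Lemma sum_incr u n : sum_f_R0 (incr u) n = u n.
Proof. induction n as [|n IH]; simpl; [|rewrite IH]; simpl; ring. Qed.

Definition positive_indices (s : list sindex) : Prop := List.Forall (fun p => (0 < fst p)%nat) s.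

Lemma trunc_cons_S k b r m :
  trunc ((k, b) :: r) (S m) = trunc ((k, b) :: r) m + zsgn b ^ S m / INR (S m) ^ k * trunc r m.
Proof. reflexivity. Qed.

Lemma trunc_cons_increment k b r m :
  trunc ((k, b) :: r) (S m) - trunc ((k, b) :: r) m = zsgn b ^ S m / INR (S m) ^ k * trunc r m.
Proof. rewrite trunc_cons_S. ring. Qed.

Lemma zsgn_cases b : zsgn b = 1 \/ zsgn b = -1.
Proof. destruct b; simpl; auto. Qed.

Lemma admissible_word_aux acc s : acc = 1 \/ acc = -1 -> admissible_word (word_aux acc s).
Proof.
  revert acc. induction s as [|[k b] r IH]; intros acc Hacc; simpl; auto.
  assert (Ha : acc * zsgn b = 1 \/ acc * zsgn b = -1)
    by (destruct Hacc as [-> | ->], (zsgn_cases b) as [-> | ->]; lra).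
  induction (Nat.pred k); simpl; auto. split; auto.
  destruct n; simpl; congruence.
Qed.

Lemma word_coef_repeat_None j w n : w <> [] ->
  word_coef (repeat None j ++ w) n =
  match n with O => 0 | S m => word_coef w (S m) / INR (S m) ^ j end.
Proof.
  intros Hw. assert (HS : forall m, INR (S m) <> 0) by (intros; apply not_0_INR; lia).
  induction j as [|j IH]; destruct n as [|m]; cbn [repeat app word_coef PS_Int]; auto.
  - apply word_coef_0; auto.
  - cbn [pow]. unfold Rdiv. rewrite Rinv_1. ring.
  - unfold PS_decr_1. rewrite IH. cbn [pow]. field. split; auto. apply pow_nonzero; auto.
Qed.

(* Expanding [dt/(a_k - t)] produces powers of [a_k = a_(k-1) z_k]; the factor
   [acc ^ n] absorbs [a_(k-1)], which leaves the signs [z_k ^ n] of the Euler sum. *)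
Lemma word_coef_word_aux acc s : acc = 1 \/ acc = -1 -> positive_indices s ->
  forall n, word_coef (word_aux acc s) n = acc ^ n * incr (trunc s) n.
Proof.
  revert acc. induction s as [|[k b] r IH]; intros acc Hacc Hpos n.
  - destruct n; simpl; ring.
  - inversion Hpos as [|? ? Hk Hpos']; subst. simpl in Hk.
    (* Literal lists live in [list (nat * bool)]; unfold [sindex] so that
       [ring] identifies the two spellings of the same term. *)
    change sindex with (nat * bool)%type in *.
    set (a := acc * zsgn b).
    assert (Ha : a = 1 \/ a = -1)
      by (unfold a; destruct Hacc as [-> | ->], (zsgn_cases b) as [-> | ->]; lra).
    assert (HS : INR (S n) <> 0) by (apply not_0_INR; lia).
    cbn [word_aux]. fold a.
    rewrite word_coef_repeat_None by congruence.
    destruct n as [|m]; [simpl; ring|].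
    cbn [word_coef PS_Int]. unfold PS_mult.
    rewrite (sum_eq _ (fun i => incr (trunc r) i * a ^ S m)).
    2:{ intros i Hi. rewrite IH by auto. rewrite (proj1 (pm1_inv_Rabs_pow a Ha)).
        replace (a ^ S m) with (a ^ i * a ^ S (m - i)) by (rewrite <- pow_add; f_equal; lia). ring. }
    rewrite <- scal_sum, sum_incr. unfold incr. rewrite trunc_cons_S.
    unfold a. rewrite Rpow_mult_distr.
    destruct k as [|j]; [lia|]. cbn [Nat.pred pow]. field.
    split; [apply pow_nonzero|]; apply not_0_INR; lia.
Qed.

Lemma iter_int_word s x : positive_indices s -> 0 <= x < 1 ->
  iter_int (word s) x = PSeries (incr (trunc s)) x.
Proof.
  intros Hpos Hx. unfold word. rewrite iter_int_PSeries by (auto; apply admissible_word_aux; auto).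
  apply PSeries_ext. intros n. rewrite word_coef_word_aux by auto. rewrite pow1. ring.
Qed.

Lemma Rabs_incr_trunc_le1 s : positive_indices s -> forall n, Rabs (incr (trunc s) n) <= 1.
Proof.
  intros Hpos n. pose proof (Rabs_word_coef_le1 _ (admissible_word_aux 1 s (or_introl eq_refl)) n).
  rewrite word_coef_word_aux, pow1, Rmult_1_l in H by auto. exact H.
Qed.

(** * Harmonic numbers and Euler's constant *)

Definition harm (n : nat) : R := sumR n (fun k => / INR k).

Lemma harm_0 : harm 0 = 0.
Proof. reflexivity. Qed.

Lemma harm_S n : harm (S n) = harm n + / INR (S n).
Proof. reflexivity. Qed.

Lemma trunc_one n : trunc [(1%nat, false)] n = harm n.
Proof.
  induction n as [|n IH]; [reflexivity|].
  rewrite harm_S, <- IH. cbn [trunc sumR zsgn Nat.pred]. rewrite pow1, pow_1. field.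
  apply not_0_INR. lia.
Qed.

Lemma inv_INR_S_bounds n : 0 < / INR (S n) <= 1.
Proof.
  split; [apply Rinv_0_lt_compat, lt_0_INR; lia|].
  rewrite <- Rinv_1. apply Rinv_le_contravar; [lra|]. apply (le_INR 1). lia.
Qed.

Lemma harm_nonneg n : 0 <= harm n.
Proof.
  induction n as [|n IH]; [rewrite harm_0; lra|].
  rewrite harm_S. pose proof (inv_INR_S_bounds n). lra.
Qed.

Lemma harm_le_INR n : harm n <= INR n.
Proof.
  induction n as [|n IH]; [rewrite harm_0; simpl; lra|].
  rewrite harm_S. pose proof (inv_INR_S_bounds n). rewrite S_INR in *. lra.
Qed.

Lemma harm_div_INR_S_le1 n : harm n / INR (S n) <= 1.
Proof.
  pose proof (harm_le_INR n). pose proof (lt_0_INR (S n) ltac:(lia)) as HS.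
  apply (Rdiv_le_1 _ _ HS). rewrite S_INR. lra.
Qed.

Lemma harm_sqr_le n : harm n ^ 2 <= 4 * INR n.
Proof.
  induction n as [|n IH]; [rewrite harm_0; simpl; lra|].
  rewrite harm_S. pose proof (harm_nonneg n). pose proof (inv_INR_S_bounds n).
  pose proof (harm_div_INR_S_le1 n). rewrite S_INR in *. unfold Rdiv in *. nra.
Qed.

Lemma ln_succ_sub_ln x : 0 < x -> / (x + 1) <= ln (x + 1) - ln x <= / x.
Proof.
  intros Hx. split.
  - assert (H : x / (x + 1) <= exp (- / (x + 1))).
    { eapply Rle_trans; [|apply exp_ineq1_le]. right. field. lra. }
    apply ln_le in H; [|apply Rdiv_lt_0_compat; lra].
    rewrite ln_exp, ln_div in H by lra. lra.
  - assert (H : (x + 1) / x <= exp (/ x)).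
    { eapply Rle_trans; [|apply exp_ineq1_le]. right. field. lra. }
    apply ln_le in H; [|apply Rdiv_lt_0_compat; lra].
    rewrite ln_exp, ln_div in H by lra. lra.
Qed.

Definition gamma_upper (n : nat) : R := harm (S n) - ln (INR (S n)).
Definition gamma_lower (n : nat) : R := harm (S n) - ln (INR (S (S n))).

Lemma gamma_upper_decreasing : Un_decreasing gamma_upper.
Proof.
  intros n. unfold gamma_upper. rewrite (harm_S (S n)).
  pose proof (ln_succ_sub_ln (INR (S n)) (lt_0_INR (S n) ltac:(lia))) as H.
  rewrite <- S_INR in H. lra.
Qed.

Lemma gamma_lower_growing : Un_growing gamma_lower.
Proof.
  intros n. unfold gamma_lower. rewrite (harm_S (S n)).
  pose proof (ln_succ_sub_ln (INR (S (S n))) (lt_0_INR (S (S n)) ltac:(lia))) as H.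
  rewrite <- S_INR in H. pose proof (inv_INR_S_bounds (S n)).
  assert (/ INR (S (S (S n))) <= / INR (S (S n)))
    by (apply Rinv_le_contravar; [apply lt_0_INR; lia| apply le_INR; lia]).
  lra.
Qed.

Lemma gamma_lower_le_upper n m : gamma_lower n <= gamma_upper m.
Proof.
  assert (Hnn : forall k, gamma_lower k <= gamma_upper k).
  { intros k. unfold gamma_lower, gamma_upper.
    assert (ln (INR (S k)) <= ln (INR (S (S k))))
      by (apply ln_le; [apply lt_0_INR; lia| apply le_INR; lia]). lra. }
  destruct (Nat.le_ge_cases n m).
  - eapply Rle_trans; [apply Rge_le, growing_prop|]; eauto using gamma_lower_growing.
  - eapply Rle_trans; [apply Hnn|]. apply decreasing_prop; auto using gamma_upper_decreasing.
Qed.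

Lemma is_lim_seq_gamma_upper : is_lim_seq gamma_upper euler_gamma.
Proof.
  destruct (ex_finite_lim_seq_decr gamma_upper (gamma_lower 0) gamma_upper_decreasing
              (gamma_lower_le_upper 0)) as [l Hl].
  replace euler_gamma with l; auto.
  unfold euler_gamma. rewrite <- Lim_seq_incr_1.
  change (l = real (Lim_seq gamma_upper)). rewrite (is_lim_seq_unique _ _ Hl). reflexivity.
Qed.

Lemma gamma_between n : gamma_lower n <= euler_gamma <= gamma_upper n.
Proof.
  split.
  - apply (is_lim_seq_le (fun _ => gamma_lower n) gamma_upper (gamma_lower n) euler_gamma).
    + intros m. apply gamma_lower_le_upper.
    + apply is_lim_seq_const.
    + apply is_lim_seq_gamma_upper.
  - apply (is_lim_seq_decr_compare _ _ is_lim_seq_gamma_upper gamma_upper_decreasing).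
Qed.

Lemma euler_gamma_nonneg : 0 <= euler_gamma.
Proof.
  pose proof (proj1 (gamma_between 0)) as H. unfold gamma_lower in H.
  rewrite harm_S, harm_0 in H. simpl INR in H.
  pose proof (ln_succ_sub_ln 1 ltac:(lra)) as Hln. rewrite ln_1 in Hln.
  replace (1 + 1) with 2 in * by ring. lra.
Qed.

Definition log_scale (n : nat) : R := ln (INR n) + euler_gamma.

Lemma harm_sub_log_scale n : (1 <= n)%nat -> Rabs (harm n - log_scale n) <= / INR n.
Proof.
  intros Hn. destruct n as [|m]; [lia|].
  pose proof (gamma_between m) as Hg. unfold log_scale, gamma_lower, gamma_upper in *.
  pose proof (ln_succ_sub_ln (INR (S m)) (lt_0_INR (S m) ltac:(lia))) as H.
  rewrite <- S_INR in H. rewrite Rabs_right; lra.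
Qed.

(** * Polynomials, limits and Abel's theorem *)

Fixpoint psub (p q : list R) : list R :=
  match p, q with
  | [], _ => map Ropp q
  | _, [] => p
  | a :: p', b :: q' => (a - b) :: psub p' q'
  end.

Lemma peval_psub p q T : peval (psub p q) T = peval p T - peval q T.
Proof.
  assert (Hneg : forall r, peval (map Ropp r) T = - peval r T)
    by (induction r as [|c r IHr]; simpl; [|rewrite IHr]; ring).
  revert q. induction p as [|a p IH]; intros [|b q]; simpl; rewrite ?Hneg, ?IH; ring.
Qed.

Section FilterLimits.

Context {T : Type} {F : (T -> Prop) -> Prop} {FF : ProperFilter F}.

Lemma filterlim_Rplus (f g : T -> R) a b :
  filterlim f F (locally a) -> filterlim g F (locally b) ->
  filterlim (fun x => f x + g x) F (locally (a + b)).
Proof. intros Hf Hg. eapply filterlim_comp_2; [exact Hf|exact Hg|]. apply (filterlim_plus a b). Qed.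

Lemma filterlim_Rmult (f g : T -> R) a b :
  filterlim f F (locally a) -> filterlim g F (locally b) ->
  filterlim (fun x => f x * g x) F (locally (a * b)).
Proof. intros Hf Hg. eapply filterlim_comp_2; [exact Hf|exact Hg|]. apply (filterlim_mult a b). Qed.

Lemma filterlim_Rinv_p_infty (t : T -> R) :
  filterlim t F (Rbar_locally p_infty) -> filterlim (fun x => / t x) F (locally 0).
Proof.
  intros Ht. eapply filterlim_comp; [exact Ht|]. apply (filterlim_Rbar_inv p_infty). discriminate.
Qed.

Lemma filterlim_scal_Rinv_p_infty c (t : T -> R) :
  filterlim t F (Rbar_locally p_infty) -> filterlim (fun x => c * / t x) F (locally 0).
Proof.
  intros Ht. rewrite <- (Rmult_0_r c). apply filterlim_Rmult; [apply filterlim_const|].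
  apply filterlim_Rinv_p_infty, Ht.
Qed.

Lemma peval_const_of_filterlim p (t : T -> R) L :
  filterlim t F (Rbar_locally p_infty) ->
  filterlim (fun x => peval p (t x)) F (locally L) -> forall y, peval p y = L.
Proof.
  revert L. induction p as [|c q IH]; intros L Ht Hp y; simpl in *.
  - exact (filterlim_locally_unique _ _ _ (filterlim_const 0) Hp).
  - assert (Hq : forall y, peval q y = 0).
    { apply IH with (1 := Ht).
      replace 0 with ((L - c) * 0) by ring.
      apply (filterlim_ext_loc (fun x => (c + t x * peval q (t x) - c) * / t x)).
      - apply (filter_imp (fun x => 0 < t x)); [intros x Hx; field; lra|].
        apply Ht. exists 0. auto.
      - apply filterlim_Rmult; [|now apply filterlim_Rinv_p_infty].
        apply (filterlim_Rplus _ (fun _ => - c)); [exact Hp|apply filterlim_const]. }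
    rewrite Hq, Rmult_0_r, Rplus_0_r.
    apply (filterlim_ext _ (fun _ => c)) in Hp; [|intros x; rewrite Hq; ring].
    exact (filterlim_locally_unique _ _ _ (filterlim_const c) Hp).
Qed.

Lemma peval_eq_of_filterlim p q (t : T -> R) :
  filterlim t F (Rbar_locally p_infty) ->
  filterlim (fun x => peval p (t x) - peval q (t x)) F (locally 0) ->
  forall y, peval p y = peval q y.
Proof.
  intros Ht Hpq y. apply Rminus_diag_uniq. rewrite <- peval_psub.
  apply (peval_const_of_filterlim _ t); auto.
  eapply filterlim_ext; [|exact Hpq]. intros x. simpl. rewrite peval_psub. reflexivity.
Qed.

End FilterLimits.



Lemma is_lim_seq_bounded (u : nat -> R) (l : R) :
  is_lim_seq u l -> exists B, forall n, Rabs (u n) <= B.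
Proof. intros Hu. destruct (filterlim_bounded u (ex_intro _ l Hu)) as [B HB]. exists B. exact HB. Qed.

Lemma filterlim_at_right_0_to_0 (f : R -> R) :
  (forall eps, 0 < eps -> exists d, 0 < d /\ forall y, 0 < y < d -> Rabs (f y) < eps) ->
  filterlim f (at_right 0) (locally 0).
Proof.
  intros Hf. apply filterlim_locally. intros [eps Heps].
  destruct (Hf eps Heps) as [d [Hd Hy]]. exists (mkposreal d Hd). intros y Hb Hpos.
  unfold ball in *; simpl in *. unfold AbsRing_ball, abs, minus, plus, opp in *; simpl in *.
  rewrite Ropp_0, Rplus_0_r in *. apply Hy. apply Rabs_def2 in Hb. lra.
Qed.

Lemma at_right_0_between : at_right 0 (fun y => 0 < y < 1).
Proof.
  exists (mkposreal 1 Rlt_0_1). intros y Hb Hy. unfold ball in Hb; simpl in Hb.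
  unfold AbsRing_ball, abs, minus, plus, opp in Hb; simpl in Hb.
  rewrite Ropp_0, Rplus_0_r in Hb. apply Rabs_def2 in Hb. lra.
Qed.

Lemma Rabs_PSeries_le (u : nat -> R) B x :
  (forall n, Rabs (u n) <= B) -> 0 <= x < 1 -> Rabs (PSeries u x) <= B / (1 - x).
Proof.
  intros Hu Hx. assert (Hxn : forall n, 0 <= x ^ n) by (intros; apply pow_le; lra).
  assert (Hgeo : ex_series (fun n => B * x ^ n))
    by (apply (ex_series_scal_l B (fun n => x ^ n)), ex_series_geom; rewrite Rabs_right; lra).
  assert (Hle : forall n, 0 <= Rabs (u n * x ^ n) <= B * x ^ n).
  { intros n. split; [apply Rabs_pos|]. rewrite Rabs_mult, (Rabs_right (x ^ n)) by (apply Rle_ge; auto).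
    apply Rmult_le_compat_r; auto. }
  unfold PSeries. eapply Rle_trans; [apply Series_Rabs|].
  - apply (@ex_series_le R_AbsRing R_CompleteNormedModule _ (fun n => B * x ^ n)); auto.
    intros n. unfold norm; simpl. unfold abs; simpl. rewrite Rabs_Rabsolu. apply Hle.
  - eapply Rle_trans; [apply (Series_le _ (fun n => B * x ^ n)); auto|].
    rewrite Series_scal_l, Series_geom by (rewrite Rabs_right; lra). right. reflexivity.
Qed.

Lemma filterlim_Abel_vanishing (e : nat -> R) : is_lim_seq e 0 ->
  filterlim (fun eps => eps * PSeries e (1 - eps)) (at_right 0) (locally 0).
Proof.
  intros He. destruct (is_lim_seq_bounded e 0 He) as [B HB].
  apply filterlim_at_right_0_to_0. intros eta Heta.
  destruct (proj2 (is_lim_seq_spec e 0) He (mkposreal (eta / 2) ltac:(lra))) as [N HN].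
  set (K := sum_f_R0 (fun k => Rabs (e k)) N).
  assert (HK : 0 <= K) by (apply cond_pos_sum; intros; apply Rabs_pos).
  exists (Rmin 1 (eta / (2 * (K + 1)))). split.
  { apply Rmin_glb_lt; [lra|]. apply Rdiv_lt_0_compat; lra. }
  intros y [Hy0 Hy]. pose proof (Rmin_l 1 (eta / (2 * (K + 1)))). pose proof (Rmin_r 1 (eta / (2 * (K + 1)))).
  set (x := 1 - y). assert (Hx : 0 <= x < 1) by (unfold x; lra).
  assert (Hxn : forall n, 0 <= x ^ n <= 1) 
    by (intros n; split; [apply pow_le; lra|rewrite <- (pow1 n); apply pow_incr; lra]).
  rewrite (PSeries_decr_n e N x) by (apply (ex_pseries_bounded e B); auto).
  assert (Hhead : Rabs (sum_f_R0 (fun k => e k * x ^ k) N) <= K).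
  { eapply Rle_trans; [apply sum_f_R0_triangle|]. apply sum_Rle. intros k _.
    rewrite Rabs_mult, (Rabs_right (x ^ k)) by (apply Rle_ge, Hxn).
    pose proof (Rabs_pos (e k)). pose proof (Hxn k). nra. }
  assert (Htail : Rabs (PSeries (PS_decr_n e (S N)) x) <= eta / 2 / y).
  { replace y with (1 - x) by (unfold x; ring). apply Rabs_PSeries_le; auto.
    intros n. unfold PS_decr_n. left. rewrite <- (Rminus_0_r (e _)). apply HN. lia. }
  assert (Hsplit : Rabs (sum_f_R0 (fun k => e k * x ^ k) N + x ^ S N * PSeries (PS_decr_n e (S N)) x)
                   <= K + eta / 2 / y).
  { eapply Rle_trans; [apply Rabs_triang|]. apply Rplus_le_compat; [exact Hhead|].
    rewrite Rabs_mult, (Rabs_right (x ^ S N)) by (apply Rle_ge, Hxn).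
    pose proof (Hxn (S N)). pose proof (Rabs_pos (PSeries (PS_decr_n e (S N)) x)). nra. }
  assert (HyK : y * K < eta / 2).
  { apply Rle_lt_trans with (eta / (2 * (K + 1)) * K); [apply Rmult_le_compat_r; lra|].
    apply (Rmult_lt_reg_r (2 * (K + 1))); [lra|]. field_simplify; lra. }
  rewrite Rabs_mult, Rabs_right by lra.
  apply Rle_lt_trans with (y * (K + eta / 2 / y)); [apply Rmult_le_compat_l; lra|].
  replace (y * (K + eta / 2 / y)) with (y * K + eta / 2) by (field; lra). lra.
Qed.

Lemma PSeries_const c x : 0 <= x < 1 -> PSeries (fun _ => c) x = c / (1 - x).
Proof.
  intros Hx. unfold PSeries.
  rewrite Series_scal_l, Series_geom by (rewrite Rabs_right; lra). reflexivity.
Qed.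

Lemma PSeries_incr (u : nat -> R) B x : (forall n, Rabs (u n) <= B) -> 0 <= x < 1 ->
  PSeries (incr u) x = (1 - x) * PSeries u x.
Proof.
  intros Hu Hx. rewrite (PSeries_ext _ (PS_minus u (PS_incr_1 u))).
  2:{ intros [|n]; [|reflexivity]. unfold PS_minus, PS_incr_1, plus, opp; simpl.
      change (@zero _) with 0. ring. }
  rewrite PSeries_minus, PSeries_incr_1; [ring| apply (ex_pseries_bounded _ B); auto|].
  apply (ex_pseries_bounded _ B); auto. intros [|n]; simpl; auto.
  unfold zero; simpl. pose proof (Hu 0%nat). pose proof (Rabs_pos (u 0%nat)). rewrite Rabs_R0. lra.
Qed.

Lemma filterlim_Abel (u : nat -> R) (l : R) : is_lim_seq u l ->
  filterlim (fun eps => PSeries (incr u) (1 - eps)) (at_right 0) (locally l).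
Proof.
  intros Hu. destruct (is_lim_seq_bounded u l Hu) as [B HB].
  set (e := fun n => u n - l).
  assert (He : is_lim_seq e 0).
  { replace (Finite 0) with (Finite (l - l)) by (f_equal; ring).
    apply is_lim_seq_minus'; [exact Hu|apply is_lim_seq_const]. }
  assert (HBe : forall n, Rabs (e n) <= B + Rabs l).
  { intros n. unfold e. pose proof (HB n). pose proof (Rabs_triang (u n) (- l)).
    unfold Rminus. rewrite Rabs_Ropp in *. lra. }
  assert (HBl : forall n : nat, Rabs l <= B + Rabs l).
  { intros n. pose proof (HB n). pose proof (Rabs_pos (u n)). lra. }
  apply (filterlim_ext_loc (fun eps => eps * PSeries e (1 - eps) + l)).
  - apply (filter_imp (fun eps => 0 < eps < 1)); [|apply at_right_0_between].
    intros y Hy. rewrite (PSeries_incr u B) by (auto; lra).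
    rewrite (PSeries_ext u (PS_plus e (fun _ => l))) by (intros n; unfold PS_plus, e, plus; simpl; ring).
    rewrite PSeries_plus, PSeries_const
      by (lra || (apply (ex_pseries_bounded _ (B + Rabs l)); auto; lra)).
    field. lra.
  - replace (locally l) with (locally (0 + l)) by (f_equal; ring).
    apply filterlim_Rplus; [|apply filterlim_const].
    apply filterlim_Abel_vanishing, He.
Qed.

Lemma PSeries_plus_of_bounded (u v : nat -> R) B x :
  (forall n, Rabs (u n) <= B) -> (forall n, Rabs (v n) <= B) -> 0 <= x < 1 ->
  PSeries (fun n => u n + v n) x = PSeries u x + PSeries v x.
Proof.
  intros Hu Hv Hx. rewrite <- PSeries_plus by (eapply ex_pseries_bounded; eauto). reflexivity.
Qed.

Lemma PSeries_scal_l c (u : nat -> R) x : PSeries (fun n => c * u n) x = c * PSeries u x.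
Proof. rewrite <- PSeries_scal. reflexivity. Qed.

Lemma Rabs_incr_le (u : nat -> R) B : (forall n, Rabs (u n) <= B) -> forall n, Rabs (incr u n) <= 2 * B.
Proof.
  intros Hu [|n]; simpl.
  - pose proof (Hu 0%nat). pose proof (Rabs_pos (u 0%nat)). lra.
  - unfold Rminus. eapply Rle_trans; [apply Rabs_triang|]. rewrite Rabs_Ropp.
    pose proof (Hu (S n)). pose proof (Hu n). lra.
Qed.

(** * Growth of truncated Euler sums *)

Lemma Rabs_zsgn_pow b n : Rabs (zsgn b ^ n) = 1.
Proof. apply (pm1_inv_Rabs_pow _ (zsgn_cases b)). Qed.

Lemma Rabs_sign_term_le j k b m : (j <= k)%nat ->
  Rabs (zsgn b ^ S m / INR (S m) ^ k) <= / INR (S m) ^ j.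
Proof.
  intros Hjk. assert (H1 : 1 <= INR (S m)) by (apply (le_INR 1); lia).
  unfold Rdiv. rewrite Rabs_mult, Rabs_zsgn_pow, Rmult_1_l, Rabs_inv, Rabs_right
    by (apply Rle_ge, pow_le; lra).
  apply Rinv_le_contravar; [apply pow_lt; lra|]. apply Rle_pow; auto.
Qed.

Lemma Rabs_sign_term_le_inv k b m : (1 <= k)%nat ->
  Rabs (zsgn b ^ S m / INR (S m) ^ k) <= / INR (S m).
Proof. intros Hk. pose proof (Rabs_sign_term_le 1 k b m Hk). rewrite pow_1 in H. exact H. Qed.

Lemma Rabs_le_of_increments (X U : nat -> R) : Rabs (X 0%nat) <= U 0%nat ->
  (forall m, Rabs (X (S m) - X m) <= U (S m) - U m) -> forall m, Rabs (X m) <= U m.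
Proof.
  intros H0 HS m. induction m as [|m IH]; auto.
  replace (X (S m)) with (X m + (X (S m) - X m)) by ring.
  eapply Rle_trans; [apply Rabs_triang|]. specialize (HS m). lra.
Qed.

Lemma inv_INR_S_sqr_le m : (1 <= m)%nat -> / INR (S m) ^ 2 <= / INR m - / INR (S m).
Proof.
  intros Hm. assert (H1 : 1 <= INR m) by (apply (le_INR 1); lia). rewrite S_INR.
  apply (Rmult_le_reg_r (INR m * (INR m + 1) ^ 2)); [apply Rmult_lt_0_compat; [lra|apply pow_lt; lra]|].
  field_simplify; lra.
Qed.

Section SingleSum.

Variables (k : nat) (b : bool).
Hypothesis Hk : (2 <= k)%nat.

Lemma trunc_single_cauchy n m : (1 <= n <= m)%nat ->
  Rabs (trunc [(k, b)] m - trunc [(k, b)] n) <= / INR n - / INR m.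
Proof.
  intros [Hn Hnm]. induction Hnm as [|m Hnm IH]; [rewrite !Rminus_eq_0, Rabs_R0; lra|].
  replace (trunc [(k, b)] (S m) - trunc [(k, b)] n)
    with ((trunc [(k, b)] m - trunc [(k, b)] n) + (trunc [(k, b)] (S m) - trunc [(k, b)] m)) by ring.
  rewrite trunc_cons_increment. change (trunc [] m) with 1. rewrite Rmult_1_r.
  pose proof (Rabs_sign_term_le 2 k b m Hk). pose proof (inv_INR_S_sqr_le m ltac:(lia)).
  eapply Rle_trans; [apply Rabs_triang|]. lra.
Qed.

Lemma is_lim_seq_trunc_single : is_lim_seq (trunc [(k, b)]) (euler_sum [(k, b)]).
Proof.
  assert (Hex : ex_finite_lim_seq (trunc [(k, b)])).
  { apply ex_lim_seq_cauchy_corr. intros eps.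
    destruct (archimed_cor1 eps (cond_pos eps)) as [N [HN HN0]].
    exists N. intros n m Hn Hm.
    assert (Hsym : forall n m, (N <= n <= m)%nat ->
              Rabs (trunc [(k, b)] m - trunc [(k, b)] n) < eps).
    { intros p q Hpq. eapply Rle_lt_trans; [apply trunc_single_cauchy; lia|].
      assert (/ INR p <= / INR N) by (apply Rinv_le_contravar; [apply lt_0_INR| apply le_INR]; lia).
      assert (0 < / INR q) by (apply Rinv_0_lt_compat, lt_0_INR; lia). lra. }
    destruct (Nat.le_ge_cases n m); [rewrite Rabs_minus_sym|]; apply Hsym; lia. }
  destruct Hex as [l Hl]. unfold euler_sum. rewrite (is_lim_seq_unique _ _ Hl). exact Hl.
Qed.

Lemma euler_sum_single_sub_trunc n : (1 <= n)%nat ->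
  Rabs (euler_sum [(k, b)] - trunc [(k, b)] n) <= / INR n.
Proof.
  intros Hn.
  apply (is_lim_seq_le_loc (fun m => Rabs (trunc [(k, b)] m - trunc [(k, b)] n)) (fun _ => / INR n)
           (Rabs (euler_sum [(k, b)] - trunc [(k, b)] n)) (/ INR n)).
  - exists n. intros m Hm. eapply Rle_trans; [apply trunc_single_cauchy; lia|].
    assert (0 < / INR m) by (apply Rinv_0_lt_compat, lt_0_INR; lia). lra.
  - apply (is_lim_seq_abs _ (euler_sum [(k, b)] - trunc [(k, b)] n)).
    apply is_lim_seq_minus'; [apply is_lim_seq_trunc_single|apply is_lim_seq_const].
  - apply is_lim_seq_const.
Qed.

End SingleSum.

Lemma Rabs_trunc_cons_le_harm k b r B :
  (forall m, Rabs (zsgn b ^ S m / INR (S m) ^ k * trunc r m) <= B / INR (S m)) ->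
  forall n, Rabs (trunc ((k, b) :: r) n) <= B * harm n.
Proof.
  intros Hterm. apply (Rabs_le_of_increments _ (fun n => B * harm n)).
  - rewrite harm_0, Rmult_0_r. change (trunc ((k, b) :: r) 0) with 0. rewrite Rabs_R0. lra.
  - intros m. rewrite trunc_cons_increment, harm_S. specialize (Hterm m). unfold Rdiv in Hterm. lra.
Qed.

Lemma pow_succ_sub_ge a h d : 0 <= a -> 0 <= h -> a ^ d * h <= (a + h) ^ S d - a ^ S d.
Proof.
  intros Ha Hh. cbn [pow]. assert (a ^ d <= (a + h) ^ d) by (apply pow_incr; lra).
  pose proof (pow_le a d Ha). nra.
Qed.

Lemma Rabs_trunc_le_harm_pow r : positive_indices r -> forall n, Rabs (trunc r n) <= harm n ^ length r.
Proof.
  induction r as [|[k b] r IH]; intros Hpos n.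
  - simpl. rewrite Rabs_R1. lra.
  - inversion Hpos as [|? ? Hk Hr]; subst. simpl in Hk. change sindex with (nat * bool)%type in *.
    revert n. apply (Rabs_le_of_increments _ (fun n => harm n ^ S (length r))).
    + change (trunc ((k, b) :: r) 0) with 0. rewrite harm_0, pow_i, Rabs_R0 by (simpl; lia). lra.
    + intros m. rewrite trunc_cons_increment, harm_S. cbn [length].
      eapply Rle_trans; [|apply pow_succ_sub_ge; [apply harm_nonneg|apply Rlt_le, inv_INR_S_bounds]].
      rewrite Rabs_mult, Rmult_comm. apply Rmult_le_compat; try apply Rabs_pos; auto.
      apply Rabs_sign_term_le_inv; auto.
Qed.

Lemma Rabs_trunc_single_le_harm k b n : (1 <= k)%nat -> Rabs (trunc [(k, b)] n) <= harm n.
Proof. intros Hk. rewrite <- pow_1. apply (Rabs_trunc_le_harm_pow [(k, b)]). repeat constructor; auto. Qed.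

Lemma Rabs_trunc_pair_le k b k' b' n : (1 <= k)%nat -> (1 <= k')%nat ->
  Rabs (trunc [(k, b); (k', b')] n) <= 4 * INR n.
Proof.
  intros Hk Hk'. eapply Rle_trans; [apply (Rabs_trunc_le_harm_pow [(k, b); (k', b')])|].
  - repeat constructor; auto.
  - apply harm_sqr_le.
Qed.

Lemma Rabs_trunc_pair_le2 k b k' b' : (2 <= k)%nat -> (1 <= k')%nat ->
  forall m, Rabs (trunc [(k, b); (k', b')] m) <= 2.
Proof.
  intros Hk Hk'.
  set (U := fun m => match m with O => 0 | S _ => 2 - (harm m + 1) / INR m end).
  assert (HU : forall m, Rabs (trunc [(k, b); (k', b')] m) <= U m).
  { apply Rabs_le_of_increments; [simpl; rewrite Rabs_R0; lra|].
    intros m. rewrite trunc_cons_increment, Rabs_mult.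
    assert (Hterm : Rabs (zsgn b ^ S m / INR (S m) ^ k) * Rabs (trunc [(k', b')] m)
                    <= harm m / INR (S m) ^ 2).
    { rewrite Rmult_comm. unfold Rdiv at 2. apply Rmult_le_compat; try apply Rabs_pos.
      - apply Rabs_trunc_single_le_harm; auto.
      - apply Rabs_sign_term_le; auto. }
    eapply Rle_trans; [exact Hterm|]. destruct m as [|m].
    + rewrite harm_0. unfold U. rewrite harm_S, harm_0. simpl INR. field_simplify; lra.
    + unfold U. rewrite (harm_S (S m)).
      pose proof (harm_nonneg (S m)). assert (Hx : 1 <= INR (S m)) by (apply (le_INR 1); lia).
      rewrite (S_INR (S m)). set (x := INR (S m)) in *. set (h := harm (S m)) in *.
      assert (Hgap : 0 <= (h + 1) / (x * (x + 1) ^ 2))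
        by (apply Rle_mult_inv_pos; [lra|apply Rmult_lt_0_compat; [lra|apply pow_lt; lra]]).
      replace (2 - (h + / (x + 1) + 1) / (x + 1) - (2 - (h + 1) / x))
        with (h / (x + 1) ^ 2 + (h + 1) / (x * (x + 1) ^ 2)) by (field; lra). lra. }
  intros m. eapply Rle_trans; [apply HU|]. destruct m as [|m]; unfold U; [lra|].
  assert (0 <= (harm (S m) + 1) / INR (S m))
    by (apply Rle_mult_inv_pos; [pose proof (harm_nonneg (S m)); lra|apply lt_0_INR; lia]).
  lra.
Qed.

Definition alt_weight (r : list sindex) (m : nat) : R :=
  match m with O => 0 | S p => trunc r p / INR (S p) end.

Lemma trunc_barred_one_S r m :
  trunc ((1%nat, true) :: r) (S m) = trunc ((1%nat, true) :: r) m + (-1) ^ S m * alt_weight r (S m).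
Proof. rewrite trunc_cons_S. simpl zsgn. rewrite pow_1. unfold alt_weight, Rdiv. ring. Qed.

(* Summation by parts against the partial sums [((-1)^m - 1) / 2] of [(-1)^n],
   which are bounded by [1]. *)
Lemma Rabs_trunc_barred_one_le r (V : nat -> R) : 0 <= V 0%nat ->
  (forall m, V m + Rabs (alt_weight r (S m) - alt_weight r m) <= V (S m)) ->
  forall m, Rabs (trunc ((1%nat, true) :: r) m) <= V m + Rabs (alt_weight r m).
Proof.
  intros HV0 HV. set (sigma := fun m : nat => ((-1) ^ m - 1) / 2).
  assert (Hsigma : forall m, Rabs (sigma m) <= 1).
  { intros m. unfold sigma. pose proof (Rabs_zsgn_pow true m) as H. simpl zsgn in H.
    assert (H1 : Rabs ((-1) ^ m) <= 1) by lra.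
    apply Rabs_le_between in H1. apply Rabs_le_between. lra. }
  assert (Hinv : forall m, Rabs (trunc ((1%nat, true) :: r) m - sigma m * alt_weight r m) <= V m).
  { induction m as [|m IH].
    - unfold sigma. simpl. replace (0 - (1 - 1) / 2 * 0) with 0 by field. rewrite Rabs_R0. lra.
    - rewrite trunc_barred_one_S.
      replace (trunc ((1%nat, true) :: r) m + (-1) ^ S m * alt_weight r (S m) - sigma (S m) * alt_weight r (S m))
        with ((trunc ((1%nat, true) :: r) m - sigma m * alt_weight r m)
              - sigma m * (alt_weight r (S m) - alt_weight r m)) by (unfold sigma; cbn [pow]; field).
      unfold Rminus at 1. eapply Rle_trans; [apply Rabs_triang|].
      rewrite Rabs_Ropp, Rabs_mult. specialize (HV m).
      pose proof (Hsigma m). pose proof (Rabs_pos (alt_weight r (S m) - alt_weight r m)). nra. }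
  intros m. specialize (Hinv m). pose proof (Hsigma m). pose proof (Rabs_pos (alt_weight r m)).
  replace (trunc ((1%nat, true) :: r) m)
    with ((trunc ((1%nat, true) :: r) m - sigma m * alt_weight r m) + sigma m * alt_weight r m) by ring.
  eapply Rle_trans; [apply Rabs_triang|]. rewrite Rabs_mult. nra.
Qed.

Lemma Rabs_alt_weight_increment_le r p :
  Rabs (alt_weight r (S (S p)) - alt_weight r (S p))
  <= Rabs (incr (trunc r) (S p)) / INR (S (S p)) + Rabs (trunc r p) / (INR (S p) * INR (S (S p))).
Proof.
  assert (Hx : 1 <= INR (S p)) by (apply (le_INR 1); lia).
  unfold alt_weight, incr. rewrite (S_INR (S p)). set (x := INR (S p)) in *.
  replace (trunc r (S p) / (x + 1) - trunc r p / x)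
    with ((trunc r (S p) - trunc r p) / (x + 1) - trunc r p / (x * (x + 1))) by (field; lra).
  unfold Rminus at 1. eapply Rle_trans; [apply Rabs_triang|].
  rewrite Rabs_Ropp. unfold Rdiv. rewrite !Rabs_mult, !Rabs_inv, (Rabs_right (x + 1)), (Rabs_right (x * (x + 1)))
    by nra. lra.
Qed.

Lemma Rabs_trunc_barred_one_single_le3 k b : (1 <= k)%nat ->
  forall m, Rabs (trunc [(1%nat, true); (k, b)] m) <= 3.
Proof.
  intros Hk m.
  set (V := fun m => match m with O => 0 | S q => 2 - (harm q + 2) / INR (S q) end).
  assert (HV2 : forall m, V m <= 2).
  { intros [|q]; unfold V; cbv beta iota; [lra|]. assert (0 <= (harm q + 2) / INR (S q)).
    { apply Rle_mult_inv_pos; [pose proof (harm_nonneg q); lra|apply lt_0_INR; lia]. } lra. }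
  assert (Hw : forall m, Rabs (alt_weight [(k, b)] m) <= 1).
  { intros [|q]; cbn [alt_weight]; [rewrite Rabs_R0; lra|].
    unfold Rdiv. rewrite Rabs_mult, (Rabs_right (/ _)) by (apply Rle_ge, Rlt_le, inv_INR_S_bounds).
    pose proof (harm_div_INR_S_le1 q). pose proof (inv_INR_S_bounds q).
    pose proof (Rabs_trunc_single_le_harm k b q Hk). unfold Rdiv in *. nra. }
  eapply Rle_trans; [apply (Rabs_trunc_barred_one_le _ V)|].
  - simpl; lra.
  - intros [|q].
    + unfold V; cbv beta iota. cbn [alt_weight]. rewrite harm_0.
      change (trunc [(k, b)] 0) with 0. simpl INR. unfold Rdiv. rewrite Rinv_1, Rmult_0_l, Rminus_0_r, Rabs_R0. lra.
    + eapply Rle_trans; [apply Rplus_le_compat_l, Rabs_alt_weight_increment_le|].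
      unfold incr. rewrite trunc_cons_increment. change (trunc [] q) with 1. rewrite Rmult_1_r.
      pose proof (Rabs_sign_term_le_inv k b q Hk). pose proof (Rabs_trunc_single_le_harm k b q Hk).
      unfold V; cbv beta iota. rewrite harm_S. pose proof (harm_nonneg q).
      assert (Hx : 1 <= INR (S q)) by (apply (le_INR 1); lia).
      rewrite (S_INR (S q)) in *. set (x := INR (S q)) in *. set (h := harm q) in *.
      assert (Rabs (zsgn b ^ S q / x ^ k) / (x + 1) <= / x / (x + 1))
        by (apply Rmult_le_compat_r; [left; apply Rinv_0_lt_compat; lra|auto]).
      assert (Rabs (trunc [(k, b)] q) / (x * (x + 1)) <= h / (x * (x + 1)))
        by (apply Rmult_le_compat_r; [left; apply Rinv_0_lt_compat; nra|auto]).
      replace (2 - (h + / x + 2) / (x + 1)) with (2 - (h + 2) / x + (/ x / (x + 1) + h / (x * (x + 1))))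
        by (field; lra). lra.
  - specialize (HV2 m). specialize (Hw m). lra.
Qed.

Lemma Rabs_trunc_barred_one_cons_le r : positive_indices r ->
  (forall q, Rabs (trunc r q) <= 4 * INR q) ->
  forall n, Rabs (trunc ((1%nat, true) :: r) n) <= 5 * (1 + harm n).
Proof.
  intros Hpos Hlin n.
  set (V := fun m => match m with O => 0 | S _ => 5 * (harm m - 1) end).
  assert (Hw : forall m, Rabs (alt_weight r m) <= 4).
  { intros [|q]; cbn [alt_weight]; [rewrite Rabs_R0; lra|].
    pose proof (Hlin q). pose proof (lt_0_INR (S q) ltac:(lia)).
    unfold Rdiv. rewrite Rabs_mult, (Rabs_right (/ _)) by (apply Rle_ge, Rlt_le, Rinv_0_lt_compat; lra).
    apply (Rmult_le_reg_r (INR (S q))); [lra|]. rewrite Rmult_assoc, Rinv_l by lra.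
    rewrite S_INR in *. lra. }
  eapply Rle_trans; [apply (Rabs_trunc_barred_one_le r V)|].
  - simpl; lra.
  - intros [|q].
    + unfold V; cbv beta iota. cbn [alt_weight]. rewrite harm_S, harm_0.
      pose proof (Hlin 0%nat). simpl INR in *. rewrite Rmult_0_r in H.
      unfold Rdiv. rewrite Rinv_1, Rmult_1_r, Rminus_0_r. lra.
    + eapply Rle_trans; [apply Rplus_le_compat_l, Rabs_alt_weight_increment_le|].
      pose proof (Rabs_incr_trunc_le1 r Hpos (S q)). pose proof (Hlin q).
      unfold V; cbv beta iota. rewrite (harm_S (S q)).
      assert (Hx : 1 <= INR (S q)) by (apply (le_INR 1); lia).
      pose proof (S_INR q). rewrite (S_INR (S q)) in *. set (x := INR (S q)) in *.
      assert (Rabs (incr (trunc r) (S q)) / (x + 1) <= 1 / (x + 1))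
        by (apply Rmult_le_compat_r; [left; apply Rinv_0_lt_compat; lra|auto]).
      assert (Rabs (trunc r q) / (x * (x + 1)) <= 4 / (x + 1)).
      { replace (4 / (x + 1)) with (4 * x / (x * (x + 1))) by (field; lra).
        apply Rmult_le_compat_r; [left; apply Rinv_0_lt_compat; nra|]. lra. }
      replace (5 * (harm (S q) + / (x + 1) - 1)) with (5 * (harm (S q) - 1) + 5 / (x + 1)) by (field; lra).
      lra.
  - specialize (Hw n). pose proof (harm_nonneg n). destruct n; unfold V; cbv beta iota; lra.
Qed.

Lemma Rabs_trunc_cons_le_of_bounded k b r M : (1 <= k)%nat ->
  (forall m, Rabs (trunc r m) <= M) -> forall n, Rabs (trunc ((k, b) :: r) n) <= M * harm n.
Proof.
  intros Hk HM. apply Rabs_trunc_cons_le_harm. intros m. rewrite Rabs_mult, Rmult_comm.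
  unfold Rdiv at 2. apply Rmult_le_compat; try apply Rabs_pos; auto. apply Rabs_sign_term_le_inv; auto.
Qed.

Lemma Rabs_trunc_cons_le_of_linear k b r K : (2 <= k)%nat ->
  (forall m, Rabs (trunc r m) <= K * INR m) -> forall n, Rabs (trunc ((k, b) :: r) n) <= K * harm n.
Proof.
  intros Hk HK.
  assert (HK0 : 0 <= K) by (pose proof (HK 1%nat); pose proof (Rabs_pos (trunc r 1)); simpl INR in *; lra).
  apply Rabs_trunc_cons_le_harm. intros m.
  pose proof (Rabs_sign_term_le 2 k b m Hk). pose proof (HK m).
  assert (HS : 0 < INR (S m)) by (apply lt_0_INR; lia).
  assert (Hm : INR m <= INR (S m)) by (apply le_INR; lia).
  rewrite Rabs_mult. eapply Rle_trans.
  { apply Rmult_le_compat; try apply Rabs_pos; eauto. }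
  replace (K / INR (S m)) with (/ INR (S m) ^ 2 * (K * INR (S m))) by (field; lra).
  apply Rmult_le_compat_l; [left; apply Rinv_0_lt_compat, pow_lt; lra|].
  apply Rmult_le_compat_l; lra.
Qed.

Section OneOneTail.

Variables (k : nat) (b : bool).
Hypothesis Hk : (2 <= k)%nat.

Let z := euler_sum [(k, b)].

Lemma Rabs_euler_sum_single_le2 : Rabs z <= 2.
Proof.
  pose proof (euler_sum_single_sub_trunc k b Hk 1 (le_n _)) as H. simpl INR in H. rewrite Rinv_1 in H.
  pose proof (Rabs_trunc_single_le_harm k b 1 ltac:(lia)) as H1. rewrite harm_S, harm_0 in H1.
  simpl INR in H1. rewrite Rinv_1 in H1. unfold z.
  pose proof (Rabs_triang (euler_sum [(k, b)] - trunc [(k, b)] 1) (trunc [(k, b)] 1)).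
  replace (euler_sum [(k, b)] - trunc [(k, b)] 1 + trunc [(k, b)] 1) with (euler_sum [(k, b)]) in H0 by ring.
  lra.
Qed.

Lemma Rabs_trunc_one_single_sub_le m : Rabs (trunc [(1%nat, false); (k, b)] m - z * harm m) <= 3.
Proof.
  set (U := fun m => match m with O => 0 | S q => 3 - / INR (S q) end).
  assert (HU3 : forall m, U m <= 3)
    by (intros [|q]; unfold U; [lra|pose proof (inv_INR_S_bounds q); lra]).
  eapply Rle_trans; [|apply (HU3 m)]. revert m.
  apply (Rabs_le_of_increments (fun m => trunc [(1%nat, false); (k, b)] m - z * harm m) U).
  - rewrite harm_0. change (trunc [(1%nat, false); (k, b)] 0) with 0. unfold U.
    replace (0 - z * 0) with 0 by ring. rewrite Rabs_R0. lra.
  - intros m. rewrite trunc_cons_S, harm_S. simpl zsgn. rewrite pow1, pow_1.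
    replace (trunc [(1%nat, false); (k, b)] m + 1 / INR (S m) * trunc [(k, b)] m - z * (harm m + / INR (S m))
             - (trunc [(1%nat, false); (k, b)] m - z * harm m))
      with (/ INR (S m) * (trunc [(k, b)] m - z)) by (field; apply not_0_INR; lia).
    rewrite Rabs_mult, Rabs_right by (apply Rle_ge, Rlt_le, inv_INR_S_bounds).
    pose proof (inv_INR_S_bounds m). destruct m as [|q]; unfold U.
    + change (trunc [(k, b)] 0) with 0. rewrite Rminus_0_l, Rabs_Ropp.
      pose proof Rabs_euler_sum_single_le2. simpl INR. rewrite Rinv_1. lra.
    + rewrite Rabs_minus_sym. pose proof (euler_sum_single_sub_trunc k b Hk (S q) ltac:(lia)).
      fold z in H0.
      assert (Hx : 1 <= INR (S q)) by (apply (le_INR 1); lia).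
      rewrite (S_INR (S q)) in *. set (x := INR (S q)) in *.
      replace (3 - / (x + 1) - (3 - / x)) with (/ (x + 1) * / x) by (field; lra).
      apply Rmult_le_compat_l; lra.
Qed.

Lemma Rabs_trunc_one_one_single_sub_le n :
  Rabs (trunc [(1%nat, false); (1%nat, false); (k, b)] n - z / 2 * harm n ^ 2) <= 4 * harm n.
Proof.
  revert n. apply (Rabs_le_of_increments _ (fun n => 4 * harm n)).
  - rewrite harm_0. change (trunc [(1%nat, false); (1%nat, false); (k, b)] 0) with 0.
    replace (0 - z / 2 * 0 ^ 2) with 0 by ring. rewrite Rabs_R0. lra.
  - intros m. rewrite trunc_cons_S, !harm_S. simpl zsgn. rewrite pow1, pow_1.
    pose proof (inv_INR_S_bounds m) as Hi. pose proof (Rabs_trunc_one_single_sub_le m) as HE.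
    pose proof Rabs_euler_sum_single_le2.
    set (E := trunc [(1%nat, false); (k, b)] m) in *. set (x := / INR (S m)) in *.
    replace (trunc [(1%nat, false); (1%nat, false); (k, b)] m + 1 / INR (S m) * E
             - z / 2 * (harm m + x) ^ 2
             - (trunc [(1%nat, false); (1%nat, false); (k, b)] m - z / 2 * harm m ^ 2))
      with (x * (E - z * harm m) - z / 2 * (x * x)) by (unfold x; field; apply not_0_INR; lia).
    unfold Rminus at 1. eapply Rle_trans; [apply Rabs_triang|].
    rewrite Rabs_Ropp, !Rabs_mult, (Rabs_right x) by lra.
    replace (4 * (harm m + x) - 4 * harm m) with (x * 3 + x) by ring.
    assert (Rabs (z / 2) <= 1)
      by (unfold Rdiv; rewrite Rabs_mult, (Rabs_right (/ 2)) by lra; lra).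
    apply Rplus_le_compat; [apply Rmult_le_compat_l; lra|]. nra.
Qed.

End OneOneTail.

(** * Comparison of the two regularizations *)

Lemma iter_int_one x : 0 <= x < 1 -> iter_int [Some 1] x = - ln (1 - x).
Proof.
  intros Hx. cbn [iter_int omega]. apply is_RInt_unique.
  replace (- ln (1 - x)) with (- ln (1 - x) - - ln (1 - 0)) by (rewrite Rminus_0_r, ln_1; ring).
  apply (is_RInt_derive (fun t => - ln (1 - t))).
  - intros t Ht. rewrite Rmin_left, Rmax_right in Ht by lra.
    auto_derive; [lra|]. field. lra.
  - intros t Ht. rewrite Rmin_left, Rmax_right in Ht by lra.
    apply (@ex_derive_continuous R_AbsRing R_NormedModule). auto_derive. lra.
Qed.

Lemma iter_int_one_one x : 0 <= x < 1 -> iter_int [Some 1; Some 1] x = ln (1 - x) ^ 2 / 2.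
Proof.
  intros Hx. change (iter_int [Some 1; Some 1] x) with (RInt (fun t => / (1 - t) * iter_int [Some 1] t) 0 x).
  rewrite (RInt_ext _ (fun t => / (1 - t) * (- ln (1 - t)))).
  2:{ intros t Ht. rewrite Rmin_left, Rmax_right in Ht by lra. rewrite iter_int_one by lra. reflexivity. }
  apply is_RInt_unique.
  replace (ln (1 - x) ^ 2 / 2) with (ln (1 - x) ^ 2 / 2 - ln (1 - 0) ^ 2 / 2)
    by (rewrite Rminus_0_r, ln_1; field).
  apply (is_RInt_derive (fun t => ln (1 - t) ^ 2 / 2)).
  - intros t Ht. rewrite Rmin_left, Rmax_right in Ht by lra.
    auto_derive; [lra|]. unfold Rminus. field. lra.
  - intros t Ht. rewrite Rmin_left, Rmax_right in Ht by lra.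
    apply (@ex_derive_continuous R_AbsRing R_NormedModule). auto_derive. lra.
Qed.

Lemma word_one : word [(1%nat, false)] = [Some 1].
Proof. cbn. rewrite Rmult_1_r. reflexivity. Qed.

Lemma word_one_one : word [(1%nat, false); (1%nat, false)] = [Some 1; Some 1].
Proof. cbn. rewrite !Rmult_1_r. reflexivity. Qed.

Lemma is_lim_seq_log_scale : is_lim_seq log_scale p_infty.
Proof.
  unfold log_scale. apply (is_lim_seq_plus _ _ p_infty euler_gamma); [|apply is_lim_seq_const|constructor].
  apply (is_lim_comp_seq ln INR p_infty p_infty); [apply is_lim_ln_p| |apply is_lim_seq_INR].
  exists 0%nat. intros; discriminate.
Qed.

Lemma log_scale_nonneg n : (1 <= n)%nat -> 0 <= log_scale n.
Proof.
  intros Hn. unfold log_scale. pose proof euler_gamma_nonneg.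
  assert (0 <= ln (INR n)) by (rewrite <- ln_1; apply ln_le; [lra|apply (le_INR 1); lia]). lra.
Qed.

Lemma peval_linear_of_growth p (t : nat -> R) K : is_lim_seq t p_infty ->
  (exists N, forall n, (N <= n)%nat -> Rabs (peval p (t n)) <= K * (1 + t n)) ->
  exists c0 c1, forall y, peval p y = c0 + c1 * y.
Proof.
  intros Ht [N HN].
  set (c0 := nth 0 p 0). set (c1 := nth 1 p 0). set (r := skipn 2 p).
  assert (Hsplit : forall y, peval p y = c0 + y * (c1 + y * peval r y))
    by (intros y; unfold c0, c1, r; destruct p as [|u [|v q]]; simpl; ring).
  exists c0, c1. intros y. rewrite Hsplit.
  enough (Hr : forall y, peval r y = 0) by (rewrite Hr; ring).
  apply (peval_const_of_filterlim r t 0 Ht).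
  set (K' := 2 * Rabs K + Rabs c0 + Rabs c1).
  change (filterlim (fun n => peval r (t n)) eventually (Rbar_locally 0)).
  apply (filterlim_le_le (fun n => - K' * / t n) _ (fun n => K' * / t n));
    [|apply filterlim_scal_Rinv_p_infty, Ht|apply filterlim_scal_Rinv_p_infty, Ht].
  - destruct (proj2 (is_lim_seq_spec t p_infty) Ht 1) as [N1 HN1].
    exists (max N N1). intros n Hn.
    specialize (HN n ltac:(lia)). specialize (HN1 n ltac:(lia)).
    rewrite Hsplit in HN. set (x := t n) in *. set (v := peval r x) in *.
    assert (Hv : Rabs (x * x * v) <= K' * x).
    { replace (x * x * v) with ((c0 + x * (c1 + x * v)) - c0 - c1 * x) by ring.
      unfold Rminus. eapply Rle_trans; [apply Rabs_triang|].
      rewrite Rabs_Ropp, Rabs_mult, (Rabs_right x) by lra.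
      pose proof (Rabs_triang (c0 + x * (c1 + x * v)) (- c0)). rewrite Rabs_Ropp in H.
      pose proof (Rabs_pos K). pose proof (Rle_abs K). pose proof (Rabs_pos c0). pose proof (Rabs_pos c1).
      unfold K'. nra. }
    rewrite !Rabs_mult, (Rabs_right x) in Hv by lra.
    assert (Habs : Rabs v <= K' * / x).
    { apply (Rmult_le_reg_l (x * x)); [nra|]. replace (x * x * (K' * / x)) with (K' * x) by (field; lra).
      exact Hv. }
    apply Rabs_le_between in Habs. lra.
Qed.

Lemma is_lim_seq_inv_INR : is_lim_seq (fun n => / INR n) 0.
Proof.
  replace (Finite 0) with (Rbar_inv p_infty) by reflexivity.
  apply is_lim_seq_inv; [apply is_lim_seq_INR|discriminate].
Qed.

Lemma is_lim_seq_log_scale_div_INR : is_lim_seq (fun n => log_scale n / INR n) 0.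
Proof.
  apply (is_lim_seq_ext (fun n => ln (INR n) / INR n + euler_gamma * / INR n)).
  { intros n. unfold log_scale, Rdiv. ring. }
  replace (Finite 0) with (Finite (0 + euler_gamma * 0)) by (f_equal; ring).
  apply is_lim_seq_plus'; [|apply is_lim_seq_mult'; [apply is_lim_seq_const|apply is_lim_seq_inv_INR]].
  apply (is_lim_comp_seq (fun y => ln y / y) INR p_infty 0);
    [apply is_lim_div_ln_p| |apply is_lim_seq_INR].
  exists 0%nat. intros; discriminate.
Qed.

Lemma is_lim_seq_harm_sub_log_scale : is_lim_seq (fun n => harm n - log_scale n) 0.
Proof.
  apply (is_lim_seq_le_le_loc (fun n => - / INR n) _ (fun n => / INR n)).
  - exists 1%nat. intros n Hn. apply Rabs_le_between, harm_sub_log_scale. lia.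
  - replace (Finite 0) with (Rbar_opp 0) by (simpl; f_equal; ring). apply -> is_lim_seq_opp. apply is_lim_seq_inv_INR.
  - apply is_lim_seq_inv_INR.
Qed.

Lemma is_lim_seq_log_scale_mul_harm_sub :
  is_lim_seq (fun n => log_scale n * (harm n - log_scale n)) 0.
Proof.
  apply (is_lim_seq_le_le_loc (fun n => - (log_scale n / INR n)) _ (fun n => log_scale n / INR n)).
  - exists 1%nat. intros n Hn. apply Rabs_le_between. rewrite Rabs_mult, Rabs_right
      by (apply Rle_ge, log_scale_nonneg; lia).
    apply Rmult_le_compat_l; [apply log_scale_nonneg; lia|]. apply harm_sub_log_scale. lia.
  - replace (Finite 0) with (Rbar_opp 0) by (simpl; f_equal; ring).
    apply -> is_lim_seq_opp. apply is_lim_seq_log_scale_div_INR.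
  - apply is_lim_seq_log_scale_div_INR.
Qed.

Section StuffleRegularization.

Variables (s : list sindex) (a C : R) (P : list R).
Hypothesis Hgrowth : forall n, Rabs (trunc s n - a * harm n ^ 2) <= C * (1 + harm n).
Hypothesis HP : stuffle_reg s P.

Lemma stuffle_reg_quadratic : exists c0 c1, forall y, peval P y = c0 + c1 * y + a * y ^ 2.
Proof.
  assert (HC : 0 <= C).
  { pose proof (Hgrowth 0%nat). pose proof (Rabs_pos (trunc s 0 - a * harm 0 ^ 2)).
    rewrite harm_0 in *. lra. }
  destruct (peval_linear_of_growth (psub P [0; 0; a]) log_scale (1 + 2 * C + 2 * Rabs a)
              is_lim_seq_log_scale) as [c0 [c1 Hlin]].
  - destruct (proj2 (is_lim_seq_spec _ 0) HP (mkposreal 1 Rlt_0_1)) as [N HN].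
    exists (max N 1). intros n Hn. specialize (HN n ltac:(lia)). simpl in HN.
    rewrite Rminus_0_r in HN. fold (log_scale n) in HN. rewrite peval_psub. simpl peval.
    pose proof (harm_sub_log_scale n ltac:(lia)) as Hd.
    pose proof (Hgrowth n) as Hg. pose proof (log_scale_nonneg n ltac:(lia)) as Ht.
    pose proof (inv_INR_S_bounds (pred n)) as Hi. replace (S (pred n)) with n in Hi by lia.
    pose proof (harm_nonneg n).
    set (t := log_scale n) in *. set (h := harm n) in *. set (D := trunc s n) in *.
    replace (peval P t - (0 + t * (0 + t * (a + t * 0))))
      with ((peval P t - D) + (D - a * h ^ 2) + a * (h - t) * (h + t)) by ring.
    assert (Hht : Rabs (h - t) <= 1) by lra.
    assert (Hsum : Rabs (h + t) <= 2 * t + 1)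
      by (apply Rabs_le_between in Hht; rewrite Rabs_right; lra).
    assert (Ha : Rabs (a * (h - t) * (h + t)) <= Rabs a * (2 * t + 1)).
    { rewrite !Rabs_mult, Rmult_assoc. apply Rmult_le_compat_l; [apply Rabs_pos|].
      pose proof (Rabs_pos (h - t)). pose proof (Rabs_pos (h + t)). nra. }
    pose proof (Rabs_triang (peval P t - D + (D - a * h ^ 2)) (a * (h - t) * (h + t))).
    pose proof (Rabs_triang (peval P t - D) (D - a * h ^ 2)).
    rewrite Rabs_minus_sym in HN. apply Rabs_le_between in Hht.
    pose proof (Rabs_pos a). nra.
  - exists c0, c1. intros y. specialize (Hlin y). rewrite peval_psub in Hlin. simpl in Hlin.
    lra.
Qed.

Lemma is_lim_seq_trunc_sub_quadratic c0 c1 :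
  (forall y, peval P y = c0 + c1 * y + a * y ^ 2) ->
  is_lim_seq (fun n => trunc s n - (c0 + c1 * harm n + a * harm n ^ 2)) 0.
Proof.
  intros HPy.
  apply (is_lim_seq_ext (fun n => (trunc s n - peval P (log_scale n)) - c1 * (harm n - log_scale n)
          - a * (2 * (log_scale n * (harm n - log_scale n)) + (harm n - log_scale n) ^ 2))).
  { intros n. rewrite HPy. ring. }
  pose proof is_lim_seq_harm_sub_log_scale as Hd.
  replace (Finite 0) with (Finite (0 - c1 * 0 - a * (2 * 0 + 0 ^ 2))) by (f_equal; ring).
  apply is_lim_seq_minus'; [apply is_lim_seq_minus'|]; [exact HP| |].
  { apply is_lim_seq_mult'; [apply is_lim_seq_const|exact Hd]. }
  apply is_lim_seq_mult'; [apply is_lim_seq_const|]. apply is_lim_seq_plus'.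
  { apply is_lim_seq_mult'; [apply is_lim_seq_const|apply is_lim_seq_log_scale_mul_harm_sub]. }
  apply (is_lim_seq_ext (fun n => (harm n - log_scale n) * ((harm n - log_scale n) * 1)));
    [intros; simpl; ring|].
  simpl pow. apply is_lim_seq_mult'; [exact Hd|]. apply is_lim_seq_mult'; [exact Hd|apply is_lim_seq_const].
Qed.

End StuffleRegularization.

Lemma filterlim_opp_ln_at_right_0 : filterlim (fun eps => - ln eps) (at_right 0) (Rbar_locally p_infty).
Proof. eapply filterlim_comp; [apply is_lim_ln_0|apply (filterlim_Rbar_opp m_infty)]. Qed.

(* What is left of [trunc s] after removing [harm] and [trunc [1; 1]], whose
   generating functions [-ln (1 - x)] and [ln (1 - x) ^ 2 / 2] are explicit. *)
Definition stuffle_remainder (s : list sindex) (c1 a : R) (n : nat) : R :=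
  trunc s n - c1 * harm n - 2 * a * trunc [(1%nat, false); (1%nat, false)] n.

Lemma iter_int_word_remainder s c1 a B x : positive_indices s ->
  (forall n, Rabs (stuffle_remainder s c1 a n) <= B) -> 0 <= x < 1 ->
  iter_int (word s) x
  = PSeries (incr (stuffle_remainder s c1 a)) x + c1 * (- ln (1 - x)) + a * ln (1 - x) ^ 2.
Proof.
  intros Hpos HB Hx.
  assert (HB0 : 0 <= B) by (pose proof (HB 0%nat); pose proof (Rabs_pos (stuffle_remainder s c1 a 0)); lra).
  set (M := 2 * B + Rabs c1 + Rabs (2 * a)).
  assert (HM : 0 <= M) by (unfold M; pose proof (Rabs_pos c1); pose proof (Rabs_pos (2 * a)); lra).
  assert (Hscal : forall c r, positive_indices r -> Rabs c <= M -> forall n, Rabs (c * incr (trunc r) n) <= M).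
  { intros c r Hr Hc n. rewrite Rabs_mult. pose proof (Rabs_incr_trunc_le1 r Hr n).
    pose proof (Rabs_pos (incr (trunc r) n)). pose proof (Rabs_pos c). nra. }
  assert (Hg : forall n, Rabs (incr (stuffle_remainder s c1 a) n) <= M).
  { intros n. pose proof (Rabs_incr_le _ B HB n). pose proof (Rabs_pos c1). pose proof (Rabs_pos (2 * a)).
    unfold M. lra. }
  assert (Hpos1 : positive_indices [(1%nat, false)]) by (repeat constructor).
  assert (Hpos11 : positive_indices [(1%nat, false); (1%nat, false)]) by (repeat constructor).
  assert (Hc1 : Rabs c1 <= M) by (unfold M; pose proof (Rabs_pos (2 * a)); lra).
  assert (Ha : Rabs (2 * a) <= M) by (unfold M; pose proof (Rabs_pos c1); lra).
  rewrite iter_int_word by auto.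
  rewrite (PSeries_ext _ (fun n => (incr (stuffle_remainder s c1 a) n + c1 * incr (trunc [(1%nat, false)]) n)
                                   + 2 * a * incr (trunc [(1%nat, false); (1%nat, false)]) n)).
  2:{ intros [|n]; unfold stuffle_remainder, incr; rewrite !trunc_one; ring. }
  rewrite (PSeries_plus_of_bounded _ _ (M + M)), (PSeries_plus_of_bounded _ _ M), !PSeries_scal_l;
    auto; try (intros n; apply (Rle_trans _ M); [apply Hscal|]; auto; lra).
  - rewrite <- !iter_int_word by auto.
    rewrite word_one, word_one_one, iter_int_one, iter_int_one_one by auto. field.
  - intros n. eapply Rle_trans; [apply Rabs_triang|]. apply Rplus_le_compat; auto.
Qed.

Lemma harm_sqr_eq n :
  harm n ^ 2 = 2 * trunc [(1%nat, false); (1%nat, false)] n + trunc [(2%nat, false)] n.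
Proof.
  induction n as [|n IH]; [rewrite harm_0; simpl; ring|].
  rewrite harm_S, !trunc_cons_S, trunc_one. change (trunc [] n) with 1. simpl zsgn. rewrite !pow1.
  replace ((harm n + / INR (S n)) ^ 2) with (harm n ^ 2 + 2 * harm n / INR (S n) + 1 / INR (S n) ^ 2)
    by (field; apply not_0_INR; lia).
  rewrite IH. rewrite pow_1. field. apply not_0_INR. lia.
Qed.

Lemma is_lim_seq_stuffle_remainder s c0 c1 a P : stuffle_reg s P ->
  (forall y, peval P y = c0 + c1 * y + a * y ^ 2) ->
  is_lim_seq (stuffle_remainder s c1 a) (c0 + a * euler_sum [(2%nat, false)]).
Proof.
  intros HP HPy.
  apply (is_lim_seq_ext (fun n => (trunc s n - (c0 + c1 * harm n + a * harm n ^ 2))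
                                  + (c0 + a * trunc [(2%nat, false)] n))).
  { intros n. unfold stuffle_remainder. rewrite harm_sqr_eq. ring. }
  rewrite <- (Rplus_0_l (c0 + _)).
  apply is_lim_seq_plus'; [apply (is_lim_seq_trunc_sub_quadratic s a P HP c0 c1 HPy)|].
  apply is_lim_seq_plus'; [apply is_lim_seq_const|].
  apply is_lim_seq_mult'; [apply is_lim_seq_const|apply is_lim_seq_trunc_single; lia].
Qed.

Theorem shuffle_reg_sub_stuffle_reg s a C P Q : positive_indices s ->
  (forall n, Rabs (trunc s n - a * harm n ^ 2) <= C * (1 + harm n)) ->
  stuffle_reg s P -> shuffle_reg s Q ->
  forall y, peval Q y = peval P y + a * euler_sum [(2%nat, false)].
Proof.
  intros Hpos Hgrowth HP HQ.
  destruct (stuffle_reg_quadratic s a C P Hgrowth HP) as [c0 [c1 HPy]].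
  set (l := c0 + a * euler_sum [(2%nat, false)]).
  pose proof (is_lim_seq_stuffle_remainder s c0 c1 a P HP HPy) as Hg.
  destruct (is_lim_seq_bounded _ _ Hg) as [B HB].
  set (R0 := [l; c1; a]).
  assert (HR0 : filterlim (fun eps => iter_int (word s) (1 - eps) - peval R0 (- ln eps))
                  (at_right 0) (locally 0)).
  { apply (filterlim_ext_loc (fun eps => PSeries (incr (stuffle_remainder s c1 a)) (1 - eps) + - l)).
    - apply (filter_imp (fun eps => 0 < eps < 1)); [|apply at_right_0_between].
      intros eps Heps. rewrite (iter_int_word_remainder s c1 a B) by (auto; lra).
      replace (1 - (1 - eps)) with eps by ring. unfold R0. simpl peval. ring.
    - replace (locally 0) with (locally (l + - l)) by (f_equal; ring).
      apply filterlim_Rplus; [apply filterlim_Abel, Hg|apply filterlim_const]. }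
  intros y. rewrite (peval_eq_of_filterlim Q R0 (fun eps => - ln eps) filterlim_opp_ln_at_right_0).
  - rewrite HPy. unfold R0, l. simpl. ring.
  - apply (filterlim_ext (fun eps => - (iter_int (word s) (1 - eps) - peval Q (- ln eps))
                                     + (iter_int (word s) (1 - eps) - peval R0 (- ln eps)))).
    { intros eps. ring. }
    replace (locally 0) with (locally (- 0 + 0)) by (f_equal; ring).
    apply filterlim_Rplus; [|exact HR0].
    eapply filterlim_comp; [exact HQ|]. apply (filterlim_opp 0).
Qed.

(** * Depth three *)

Lemma trunc_depth3_growth k1 b1 k2 b2 k3 b3 :
  (1 <= k1)%nat -> (1 <= k2)%nat -> (1 <= k3)%nat ->
  ((k1, b1), (k2, b2)) <> ((1%nat, false), (1%nat, false)) ->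
  exists C, forall n, Rabs (trunc [(k1, b1); (k2, b2); (k3, b3)] n) <= C * (1 + harm n).
Proof.
  intros Hk1 Hk2 Hk3 Hab.
  assert (Hweaken : forall M, (forall n, Rabs (trunc [(k1, b1); (k2, b2); (k3, b3)] n) <= M * harm n) ->
            exists C, forall n, Rabs (trunc [(k1, b1); (k2, b2); (k3, b3)] n) <= C * (1 + harm n)).
  { intros M HM. exists (Rabs M). intros n. eapply Rle_trans; [apply HM|].
    pose proof (harm_nonneg n). pose proof (Rle_abs M). pose proof (Rabs_pos M). nra. }
  destruct (Nat.le_gt_cases 2 k1) as [Hk1'|Hk1'].
  { apply (Hweaken 4), Rabs_trunc_cons_le_of_linear; auto.
    intros m. apply Rabs_trunc_pair_le; auto. }
  replace k1 with 1%nat in * by lia. destruct b1.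
  { exists 5. apply Rabs_trunc_barred_one_cons_le; [repeat constructor; auto|].
    intros q. apply Rabs_trunc_pair_le; auto. }
  destruct (Nat.le_gt_cases 2 k2) as [Hk2'|Hk2'].
  { apply (Hweaken 2), Rabs_trunc_cons_le_of_bounded; auto.
    intros m. apply Rabs_trunc_pair_le2; auto. }
  replace k2 with 1%nat in * by lia. destruct b2; [|congruence].
  apply (Hweaken 3), Rabs_trunc_cons_le_of_bounded; auto.
  intros m. apply Rabs_trunc_barred_one_single_le3; auto.
Qed.

Theorem lemma5p1 :
  (forall (a b c : sindex) (w : nat),
      (0 < fst a)%nat -> (0 < fst b)%nat -> (0 < fst c)%nat ->
      (fst a + fst b + fst c)%nat = w -> (4 <= w)%nat ->
      (a, b) <> ((1%nat, false), (1%nat, false)) ->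
      forall P Q : list R,
        stuffle_reg [a; b; c] P -> shuffle_reg [a; b; c] Q ->
        forall T : R, peval Q T = peval P T)
  /\
  (forall (c : sindex) (w : nat),
      (4 <= w)%nat -> fst c = (w - 2)%nat ->
      forall P Q : list R,
        stuffle_reg [(1%nat, false); (1%nat, false); c] P ->
        shuffle_reg [(1%nat, false); (1%nat, false); c] Q ->
        forall T : R,
          peval Q T = peval P T
                      + / 2 * euler_sum [(2%nat, false)] * euler_sum [c]).
Proof.
  split.
  - (* The growth bound, hence the equality, holds whatever the weight. *)
    intros [k1 b1] [k2 b2] [k3 b3] w Ha Hb Hc _ _ Hab P Q HP HQ T. simpl in Ha, Hb, Hc.
    destruct (trunc_depth3_growth k1 b1 k2 b2 k3 b3 Ha Hb Hc Hab) as [C HC].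
    rewrite (shuffle_reg_sub_stuffle_reg _ 0 C P Q) with (3 := HP) (4 := HQ); [ring| |].
    + repeat constructor; auto.
    + intros n. rewrite Rmult_0_l, Rminus_0_r. apply HC.
  - intros [k b] w Hw Hk P Q HP HQ T. simpl in Hk. change sindex with (nat * bool)%type in *.
    rewrite (shuffle_reg_sub_stuffle_reg _ (euler_sum [(k, b)] / 2) 4 P Q) with (3 := HP) (4 := HQ);
      [field| |].
    + repeat constructor; simpl; lia.
    + intros n. eapply Rle_trans; [apply Rabs_trunc_one_one_single_sub_le; lia|].
      pose proof (harm_nonneg n). lra.
Qed.
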